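(* Let $n$ be a positive integer. Let $R_n\subseteq T_n$ be the set of triples $(A,B,C)\in T_n$ with $C$ empty, and let $D_n^0\subseteq D_n$ be the set of pairs $(H,X)\in D_n$ with $X$ on the horizontal axis. Define $r:R_n\to D_n^0$ by $r(A,B,\emptyset)=(H,X)$, where $H$ is the concatenation of $A$ and $B$ and $X$ is the point at which $A$ and $B$ meet. Then $r$ is a bijection.
   Context: A lattice path here is a finite (possibly empty) sequence of steps, each an up step $(1,1)$ or a down step $(1,-1)$, drawn as a polygonal line from a given starting lattice point; its lattice points are its starting point and the endpoints of its steps. $T_n$ is the set of ordered triples $(A,B,C)$ of lattice paths such that for some nonnegative integers $i,j,k$ with $i+j+k=n$, $A$ has $i$ up and $i$ down steps, $B$ has $j$ up and $j$ down steps, and $C$ has $k$ up and $k$ down steps. $D_n$ is the set of pairs $(H,X)$ where $H$ is a lattice path with $n$ up steps and $n$ down steps drawn from $(0,0)$ to $(2n,0)$ and $X$ is one of the $2n+1$ lattice points of $H$. The concatenation of paths is obtained by drawing them successively, each starting at the endpoint of the preceding one, the first starting at $(0,0)$. *)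

From mathcomp Require Import all_boot all_order all_algebra.
Set Implicit Arguments. Unset Strict Implicit. Unset Printing Implicit Defensive.
Import GRing.Theory Num.Theory.
Local Open Scope ring_scope.

(* A lattice lpath is its sequence of steps: true = up step (1,1),
   false = down step (1,-1). *)
Definition lpath := seq bool.
Definition point := (int * int)%type.

Definition step_dy (b : bool) : int := if b then 1 else -1.

Definition height (p : lpath) : int := \sum_(b <- p) step_dy b.

Definition nups (p : lpath) : nat := count id p.
Definition ndowns (p : lpath) : nat := count negb p.

Definition lattice_points (p : lpath) : seq point :=
  [seq ((k%:Z), height (take k p)) | k <- iota 0 (size p).+1].

Definition in_T (n : nat) (t : lpath * lpath * lpath) : Prop :=
  let: (A, B, C) := t in
  exists i j k : nat, (i + j + k)%N = n /\
    nups A = i /\ ndowns A = i /\ nups B = j /\ ndowns B = j /\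
    nups C = k /\ ndowns C = k.

Definition in_R (n : nat) (t : lpath * lpath * lpath) : Prop :=
  in_T n t /\ t.2 = [::].

Definition in_D (n : nat) (d : lpath * point) : Prop :=
  let: (H, X) := d in
  nups H = n /\ ndowns H = n /\ X \in lattice_points H.

Definition in_D0 (n : nat) (d : lpath * point) : Prop :=
  in_D n d /\ d.2.2 = 0.

Definition r (t : lpath * lpath * lpath) : lpath * point :=
  let: (A, B, _) := t in (A ++ B, ((size A)%:Z, height A)).

From mathcomp Require Import all_boot all_order all_algebra.
From mathcomp Require Import zify.
Import GRing.Theory Num.Theory.
Local Open Scope ring_scope.

(* Splitting a balanced path at a lattice point on the axis gives two balanced
   paths, and a concatenation of balanced paths returns to the axis where its
   two pieces meet; the split point (size A) recovers A and B from A ++ B. *)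

Lemma heightE (p : lpath) : height p = (nups p)%:Z - (ndowns p)%:Z.
Proof.
elim: p => [|b p IH]; first by rewrite /height big_nil.
rewrite /height big_cons -/(height p) IH /nups /ndowns /=.
by case: b; rewrite /step_dy /=; lia.
Qed.

Lemma height_eq0 (p : lpath) : (height p = 0) <-> nups p = ndowns p.
Proof. by rewrite heightE; split=> [/eqP | ->]; rewrite ?subrr // subr_eq0 => /eqP []. Qed.

Lemma nups_cat (p q : lpath) : nups (p ++ q) = (nups p + nups q)%N.
Proof. exact: count_cat. Qed.

Lemma ndowns_cat (p q : lpath) : ndowns (p ++ q) = (ndowns p + ndowns q)%N.
Proof. exact: count_cat. Qed.

Lemma lattice_pointsP (p : lpath) (X : point) :
  reflect (exists2 k, (k <= size p)%N & X = (k%:Z, height (take k p)))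
          (X \in lattice_points p).
Proof.
apply: (iffP mapP) => [[k] | [k le_kp ->]].
  by rewrite mem_iota add0n ltnS => le_kp ->; exists k.
by exists k; rewrite // mem_iota add0n ltnS.
Qed.

Lemma in_RP (n : nat) (A B C : lpath) :
  in_R n (A, B, C) <->
  [/\ C = [::], nups A = ndowns A, nups B = ndowns B & (nups A + nups B)%N = n].
Proof.
split=> [[[i [j [k [<- [-> [<- [-> [<- [Ck _]]]]]]]]] /= C0] | [C0 hA hB <-]].
  by subst C; move: Ck; rewrite /nups /= => <-; rewrite addn0.
split=> //; exists (nups A), (nups B), 0%N.
by subst C; rewrite addn0.
Qed.

Lemma cat_inj_size {T : Type} {A B A' B' : seq T} :
  size A = size A' -> A ++ B = A' ++ B' -> A = A' /\ B = B'.
Proof.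
move=> eq_size eq_cat; split.
  by rewrite -(take_size_cat B (erefl (size A))) eq_cat eq_size take_size_cat.
by rewrite -(drop_size_cat B (erefl (size A))) eq_cat eq_size drop_size_cat.
Qed.

Theorem proposition1 (n : nat) (hn : (0 < n)%N) :
  (forall t, in_R n t -> in_D0 n (r t)) /\
  (forall t1 t2, in_R n t1 -> in_R n t2 -> r t1 = r t2 -> t1 = t2) /\
  (forall d, in_D0 n d -> exists t, in_R n t /\ r t = d).
Proof.
split; last split.
- move=> [[A B] C] /in_RP [_ hA hB <-].
  rewrite /in_D0 /in_D /=; split; last exact/height_eq0.
  rewrite nups_cat ndowns_cat -hA -hB; split=> //; split=> //.
  by apply/lattice_pointsP; exists (size A); rewrite ?size_cat ?leq_addr ?take_size_cat.
- move=> [[A B] C] [[A' B'] C'] /in_RP [-> _ _ _] /in_RP [-> _ _ _] [eq_cat eq_size _].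
  by case: (cat_inj_size eq_size eq_cat) => -> ->.
move=> [H X] [[upsH [downsH /lattice_pointsP [k le_kH eqX]]] /= X0].
have hA : nups (take k H) = ndowns (take k H) by apply/height_eq0; rewrite -X0 eqX.
have := nups_cat (take k H) (drop k H); have := ndowns_cat (take k H) (drop k H).
rewrite cat_take_drop upsH downsH => dn un.
exists (take k H, drop k H, [::]); split.
  by apply/in_RP; split=> //; lia.
by rewrite /r cat_take_drop eqX size_takel.
Qed.
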